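(* Let $n\in\mathbb{N}$ and $\xi_1,\dots,\xi_n\ge0$ with $\xi_1+\dots+\xi_n=1$. For $j\in[n]$ define $\phi_j:\mathbb{R}^n\to\mathbb{R}$ by $\phi_j(z)=\frac{\xi_j\exp(z_j)}{\sum_{k=1}^n\xi_k\exp(z_k)}$, and let $\sum_{\gamma\in\mathbb{Z}_{\ge0}^n}a_{j,\gamma}z^\gamma$ be its Taylor series at $0$. Then for every $j\in[n]$ and every integer $k\ge1$, $$\sum_{\gamma\in\mathbb{Z}_{\ge0}^n:\,|\gamma|=k}|a_{j,\gamma}|\le\xi_je^{k+1}.$$
   Context: $z^\gamma=z_1^{\gamma_1}\cdots z_n^{\gamma_n}$ and $|\gamma|=\gamma_1+\dots+\gamma_n$. *)

From HB Require Import structures.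
From mathcomp Require Import all_boot all_order all_algebra.
From mathcomp Require Import all_classical all_reals all_analysis.
Set Implicit Arguments. Unset Strict Implicit. Unset Printing Implicit Defensive.
Import Order.TTheory GRing.Theory Num.Theory.
Local Open Scope ring_scope.

Definition softphi (R : realType) (n : nat) (xi : 'I_n -> R) (j : 'I_n)
  (z : 'rV[R]_n) : R :=
  xi j * expR (z ord0 j) / \sum_(k < n) xi k * expR (z ord0 k).

Definition pderiv (R : realType) (n : nat) (i : 'I_n)
  (f : 'rV[R]_n -> R) : 'rV[R]_n -> R :=
  fun z => derive f z (delta_mx 0 i : 'rV[R]_n).

Definition mpderiv (R : realType) (n : nat) (gamma : 'I_n -> nat)
  (f : 'rV[R]_n -> R) : 'rV[R]_n -> R :=
  foldr (fun i g => iter (gamma i) (pderiv i) g) f (enum 'I_n).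

Definition taylor_coef (R : realType) (n : nat) (f : 'rV[R]_n -> R)
  (gamma : 'I_n -> nat) : R :=
  mpderiv gamma f 0 / (\prod_(i < n) (gamma i)`!)%:R.

From HB Require Import structures.
From mathcomp Require Import all_boot all_order all_algebra.
From mathcomp Require Import all_classical all_reals all_analysis.
From mathcomp Require Import ring.
Set Implicit Arguments. Unset Strict Implicit. Unset Printing Implicit Defensive.
Import Order.TTheory GRing.Theory Num.Theory.
Local Open Scope ring_scope.

(* Since d_i phi_m = phi_m ((m == i) - phi_i), every iterated partial derivative
   of phi_j is a polynomial in phi_1, ..., phi_n.  Such polynomials are
   represented formally as lists of (coefficient, word of letters in 'I_n)
   pairs, and d_i acts on them by an explicit rewriting rule.  As phi_m(0) = xi_m,
   the value at 0 of a formal polynomial is bounded by its xi-weighted l1 norm,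
   and because \sum_i xi_i = 1 one derivation step multiplies the norm, summed
   over the n directions, by at most 2 d on polynomials of degree <= d.
   Hence the values at 0 of the derivatives d_w phi_j, summed over all words w
   of length k, are at most 2^k k! xi_j.  Partial derivatives commute on these
   polynomials, so d_w only depends on the multi-index gamma counting the
   letters of w; regrouping the words by gamma (k!/gamma! words each) turns the
   sum over words into k! times the sum of the |a_{j,gamma}| with |gamma| = k.
   This gives the bound 2^k xi_j <= e^(k+1) xi_j. *)

Section WordSums.
Variables (R : numDomainType) (n : nat).

Fixpoint sum_words (k : nat) (f : seq 'I_n -> R) : R :=
  if k is k'.+1 then \sum_(i < n) sum_words k' (fun w => f (i :: w)) else f [::].

Lemma eq_sum_words k f g :
  (forall w, size w = k -> f w = g w) -> sum_words k f = sum_words k g.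
Proof.
elim: k f g => [|k IH] f g fg /=; first exact: fg.
by apply: eq_bigr => i _; apply: IH => w sw; apply: fg; rewrite /= sw.
Qed.

Lemma ler_sum_words k f g :
  (forall w, size w = k -> f w <= g w) -> sum_words k f <= sum_words k g.
Proof.
elim: k f g => [|k IH] f g fg /=; first exact: fg.
by apply: ler_sum => i _; apply: IH => w sw; apply: fg; rewrite /= sw.
Qed.

Lemma sum_words_sum k (F : 'I_n -> seq 'I_n -> R) :
  sum_words k (fun w => \sum_(i < n) F i w) = \sum_(i < n) sum_words k (F i).
Proof.
elim: k F => [//|k IH] F /=.
by rewrite (eq_bigr _ (fun a _ => IH (fun i w => F i (a :: w)))) exchange_big.
Qed.

Lemma sum_wordsZ k c f : sum_words k (fun w => c * f w) = c * sum_words k f.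
Proof.
elim: k f => [//|k IH] f /=.
by rewrite mulr_sumr; apply: eq_bigr => i _; rewrite IH.
Qed.

(* Summing over the first letter inside instead of outside.  In d_w the first
   letter is the last derivation applied, so this is the form used for
   induction on the number of derivations. *)
Lemma sum_wordsS k f :
  sum_words k.+1 f = sum_words k (fun w => \sum_(i < n) f (i :: w)).
Proof.
elim: k f => [//|k IH] f.
rewrite [LHS]/= (eq_bigr _ (fun a _ => IH (fun w => f (a :: w)))).
rewrite -sum_words_sum [RHS]/= -sum_words_sum.
by apply: eq_sum_words => w _; rewrite exchange_big.
Qed.

End WordSums.

Section MultiIndices.
Variables (R : numFieldType) (n K : nat).

Local Notation mindex := {ffun 'I_n -> 'I_K.+1}.

Definition mtype (w : seq 'I_n) : mindex := [ffun m => inord (count_mem m w)].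
Definition mdeg (g : mindex) : nat := \sum_(i < n) (g i : nat).
Definition mfact (g : mindex) : nat := \prod_(i < n) (g i)`!.
(* gamma + e_i and gamma - e_i (truncated to the bound K). *)
Definition mincr (i : 'I_n) (g : mindex) : mindex :=
  [ffun m => inord (g m + (m == i))].
Definition mdecr (i : 'I_n) (g : mindex) : mindex :=
  [ffun m => inord (g m - (m == i))].

Lemma mincr_val i (b : mindex) m :
  (b i < K)%N -> (mincr i b m : nat) = (b m + (m == i))%N.
Proof.
move=> bi; rewrite ffunE inordK //.
case: eqP => [->|_]; first by rewrite addn1 ltnS.
by rewrite addn0 ltn_ord.
Qed.

Lemma mincrK i (b : mindex) : (b i < K)%N -> mdecr i (mincr i b) = b.
Proof.
move=> bi; apply/ffunP => m; apply: val_inj.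
by rewrite ffunE /= mincr_val // addnK inordK.
Qed.

Lemma mdecrK i (g : mindex) : (0 < g i)%N -> mincr i (mdecr i g) = g.
Proof.
move=> gi; apply/ffunP => m; apply: val_inj.
have gm : (g m - (m == i) < K.+1)%N.
  exact: leq_ltn_trans (leq_subr _ _) (ltn_ord _).
rewrite !ffunE /= (inordK gm).
case: eqP => [->|_]; last by rewrite !subn0 !addn0 inordK.
by rewrite subnK // inordK.
Qed.

Lemma mdeg_mincr i (b : mindex) : (b i < K)%N -> mdeg (mincr i b) = (mdeg b).+1.
Proof.
move=> bi; rewrite /mdeg (eq_bigr _ (fun m _ => mincr_val m bi)) big_split /=.
suff -> : (\sum_(m < n) (m == i) = 1)%N by rewrite addn1.
by rewrite (bigD1 i) //= eqxx big1 // => m /negbTE ->.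
Qed.

Lemma mfact_mincr i (b : mindex) :
  (b i < K)%N -> mfact (mincr i b) = ((b i).+1 * mfact b)%N.
Proof.
move=> bi; rewrite /mfact (bigD1 i) //= [in RHS](bigD1 i) //=.
rewrite mincr_val // eqxx addn1 factS -mulnA; congr (_ * (_ * _))%N.
by apply: eq_bigr => m /negbTE mi; rewrite mincr_val // mi addn0.
Qed.

Lemma leq_mdeg (b : mindex) m : (b m <= mdeg b)%N.
Proof. by rewrite /mdeg (bigD1 m) //= leq_addr. Qed.

Lemma mfact_neq0 g : (mfact g)%:R != 0 :> R.
Proof.
by rewrite pnatr_eq0 -lt0n prodn_gt0 // => m; rewrite fact_gt0.
Qed.

Lemma mtype_nil : mtype [::] = [ffun => ord0].
Proof. by apply/ffunP => m; rewrite !ffunE; apply: val_inj; rewrite /= inordK. Qed.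

Lemma mtype_cons i w : (size w < K)%N -> mtype (i :: w) = mincr i (mtype w).
Proof.
move=> sw; apply/ffunP => m.
have cm : (count_mem m w < K.+1)%N.
  by rewrite ltnS (leq_trans (count_size _ _)) // ltnW.
by rewrite !ffunE /= (inordK cm) eq_sym addnC.
Qed.

(* Adding e_i is a bijection from {|b| = k} onto {|g| = k + 1, g_i > 0}. *)
Lemma sum_mincr i k (G : mindex -> R) : (k < K)%N ->
  \sum_(b : mindex | mdeg b == k) G (mincr i b) =
  \sum_(g : mindex | (mdeg g == k.+1) && (0 < g i)%N) G g.
Proof.
move=> kK; rewrite [RHS](reindex_onto (mincr i) (mdecr i)) /=; last first.
  by move=> g /andP[_]; apply: mdecrK.
apply: eq_bigl => b; case: (ltnP (b i) K) => bi.
  by rewrite mdeg_mincr // mincrK // eqxx andbT eqSS mincr_val // eqxx addn1 andbT.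
have -> : (mdeg b == k) = false.
  by apply/negbTE; rewrite neq_ltn (leq_trans kK (leq_trans bi (leq_mdeg b i))) orbT.
by rewrite ffunE eqxx /inord /insubd insubN ?andbF // addn1 ltnS -leqNgt.
Qed.

Lemma sum_mincr_weight i k (X : mindex -> R) : (k < K)%N ->
  \sum_(b : mindex | mdeg b == k) X (mincr i b) * (k`!)%:R / (mfact b)%:R =
  \sum_(g : mindex | mdeg g == k.+1) X g * (k`!)%:R * (g i)%:R / (mfact g)%:R.
Proof.
move=> kK; pose G g := X g * (k`!)%:R * (g i)%:R / (mfact g)%:R.
transitivity (\sum_(b : mindex | mdeg b == k) G (mincr i b)).
  apply: eq_bigr => b /eqP bk.
  have bi : (b i < K)%N by apply: leq_ltn_trans kK; rewrite -bk leq_mdeg.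
  rewrite /G mfact_mincr // mincr_val // eqxx addn1 natrM.
  have bi0 : ((b i).+1)%:R != 0 :> R by rewrite pnatr_eq0.
  by field; rewrite mfact_neq0 addrC natr1 bi0.
rewrite sum_mincr // [RHS](bigID (fun g : mindex => (0 < g i)%N)) /=.
rewrite [X in _ = _ + X]big1 ?addr0 // => g /andP[_].
by rewrite -eqn0Ngt /G => /eqP ->; rewrite mulr0 mul0r.
Qed.

Lemma sum_words_mtype k (X : mindex -> R) : (k <= K)%N ->
  sum_words k (fun w => X (mtype w)) =
  \sum_(g : mindex | mdeg g == k) X g * (k`!)%:R / (mfact g)%:R.
Proof.
elim: k X => [|k IH] X kK.
  rewrite /= mtype_nil (big_pred1 [ffun => ord0]); last first.
    move=> g; rewrite /= /mdeg sum_nat_eq0; apply/forallP/eqP => [g0|->] /=.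
      by apply/ffunP => m; apply: val_inj; rewrite ffunE /=; apply/eqP/g0.
    by move=> m; rewrite ffunE.
  by rewrite /mfact big1 ?divr1 ?mulr1 // => m _; rewrite ffunE.
transitivity (\sum_(i < n) \sum_(g : mindex | mdeg g == k.+1)
                X g * (k`!)%:R * (g i)%:R / (mfact g)%:R).
  apply: eq_bigr => i _; rewrite -sum_mincr_weight // -IH ?(ltnW kK) //.
  by apply: eq_sum_words => w sw; rewrite mtype_cons // sw.
rewrite exchange_big /=; apply: eq_bigr => g /eqP gk.
rewrite -mulr_suml -mulr_sumr -natr_sum -/(mdeg g) gk factS natrM; ring.
Qed.

End MultiIndices.

Section CoordinateExp.
Variables (R : realType) (n : nat).
Local Notation V := 'rV[R]_n.

Lemma derive_coord (g : R -> R) (m : 'I_n) (z v : V) :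
  derive (fun y : V => g (y ord0 m)) z v = derive g (z ord0 m) (v ord0 m) /\
  (derivable (fun y : V => g (y ord0 m)) z v <-> derivable g (z ord0 m) (v ord0 m)).
Proof.
have quot : (fun h : R => h^-1 *: (((fun y : V => g (y ord0 m)) \o shift z) (h *: v)
            - g (z ord0 m))) =
          (fun h : R => h^-1 *: ((g \o shift (z ord0 m)) (h *: v ord0 m) - g (z ord0 m))).
  by apply/funext => h /=; rewrite !mxE.
by rewrite /derive /derivable quot.
Qed.

Definition expc (m : 'I_n) : V -> R := fun y => expR (y ord0 m).

Lemma expc_derive (m i : 'I_n) (z : V) :
  is_derive z (delta_mx 0 i : V) (expc m) ((m == i)%:R * expc m z).
Proof.
have [D1 D2] := derive_coord expR m z (delta_mx 0 i).
have dm : (delta_mx 0 i : V) ord0 m = (m == i)%:R by rewrite mxE eqxx /= eq_sym.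
rewrite dm in D1 D2.
apply: DeriveDef.
  by apply/D2; case: eqP => _; [exact: derivable_expR | exact: derivable0].
rewrite /expc D1; case: eqP => _; first by rewrite mul1r derive_val.
by rewrite mul0r derive0.
Qed.

End CoordinateExp.

Section Softmax.
Variables (R : realType) (n : nat) (xi : 'I_n -> R).
Hypothesis xi_ge0 : forall i, 0 <= xi i.
Hypothesis xi_sum : \sum_(i < n) xi i = 1.

Local Notation V := 'rV[R]_n.

Definition softden (z : V) : R := \sum_(k < n) xi k * expc k z.

Lemma softden_gt0 z : 0 < softden z.
Proof.
have ge0 k : true -> 0 <= xi k * expc k z by rewrite mulr_ge0 ?expR_ge0.
rewrite lt_def sumr_ge0 ?andbT //; apply/negP => /eqP/(psumr_eq0P ge0) den0.
have : \sum_(i < n) xi i = 0.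
  apply: big1 => i _; have /eqP := den0 i isT.
  by rewrite mulf_eq0 [expc i z == 0]gt_eqF ?expR_gt0 // orbF => /eqP.
by rewrite xi_sum => /eqP; rewrite oner_eq0.
Qed.

Lemma softden_derive i z :
  is_derive z (delta_mx 0 i : V) softden (xi i * expc i z).
Proof.
have -> : softden = \sum_(k < n) (fun y => xi k * expc k y).
  by apply/funext => y; rewrite fct_sumE.
have -> : xi i * expc i z = \sum_(k < n) xi k * ((k == i)%:R * expc k z).
  rewrite (bigD1 i) //= eqxx mul1r big1 ?addr0 // => k /negbTE ->.
  by rewrite mul0r mulr0.
by apply: is_derive_sum => k; apply: is_deriveZ; apply: expc_derive.
Qed.

Lemma softphi_derive m i z :
  is_derive z (delta_mx 0 i : V) (softphi xi m)
    (softphi xi m z * ((m == i)%:R - softphi xi i z)).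
Proof.
have den0 : softden z != 0 by rewrite gt_eqF // softden_gt0.
have Dinv : is_derive z (delta_mx 0 i : V) (fun y => (softden y)^-1)
              (- (softden z) ^-2 *: (xi i * expc i z)).
  have D := softden_derive i z.
  by apply: DeriveDef; [exact: derivableV | rewrite deriveV // derive_val].
have -> : softphi xi m = (fun y => xi m * expc m y) * (fun y => (softden y)^-1).
  by apply/funext => y.
have Dnum : is_derive z (delta_mx 0 i : V) (fun y => xi m * expc m y)
              (xi m * ((m == i)%:R * expc m z)).
  exact: (is_deriveZ (xi m) (expc_derive m i z)).
apply: (is_derive_eq (is_deriveM Dnum Dinv)).
rewrite /softphi -/(softden z) /expc /GRing.scale /=.
rewrite [X in _ = X * _](_ : _ = xi m * expR (z ord0 m) * (softden z)^-1) //.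
by field.
Qed.

(* Formal polynomials in phi_1, ..., phi_n: lists of terms (c, s) standing for
   c * \prod_(m <- s) phi_m. *)
Definition fpoly := seq (R * seq 'I_n).

Definition phimon (s : seq 'I_n) (z : V) : R := \prod_(m <- s) softphi xi m z.
Definition feval (P : fpoly) (z : V) : R := \sum_(t <- P) t.1 * phimon t.2 z.

(* Formal derivation d_i, following
   d_i (c * \prod_(m <- s) phi_m) = c * \prod_(m <- s) phi_m * (#i in s - |s| phi_i). *)
Definition fderiv_term (i : 'I_n) (t : R * seq 'I_n) : fpoly :=
  [:: (t.1 * (count_mem i t.2)%:R, t.2); (- (t.1 * (size t.2)%:R), i :: t.2)].
Definition fderiv (i : 'I_n) (P : fpoly) : fpoly :=
  flatten [seq fderiv_term i t | t <- P].

Lemma phimon_derive i s z : is_derive z (delta_mx 0 i : V) (phimon s)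
  (phimon s z * ((count_mem i s)%:R - (size s)%:R * softphi xi i z)).
Proof.
elim: s => [|m s IH].
  have -> : phimon [::] = cst 1 by apply/funext => y; rewrite /phimon big_nil.
  by apply: (is_derive_eq (is_derive_cst _ _ _)); rewrite /= !mul0r subr0 mulr0.
have -> : phimon (m :: s) = softphi xi m * phimon s.
  by apply/funext => y; rewrite /phimon big_cons.
apply: (is_derive_eq (is_deriveM (softphi_derive m i z) IH)).
rewrite /GRing.scale /= [X in _ = X * _](_ : _ = softphi xi m z * phimon s z) //.
by rewrite natrD -addn1 natrD; case: eqP => [->|_] /=; ring.
Qed.

Lemma big_fderiv (G : R * seq 'I_n -> R) i P :
  \sum_(t <- fderiv i P) G t = \sum_(t <- P)
     (G (t.1 * (count_mem i t.2)%:R, t.2) + G (- (t.1 * (size t.2)%:R), i :: t.2)).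
Proof.
by rewrite big_flatten big_map; apply: eq_bigr => t _; rewrite /= !big_cons big_nil addr0.
Qed.

Lemma feval_fderiv i P z : feval (fderiv i P) z = \sum_(t <- P)
  t.1 * (phimon t.2 z * ((count_mem i t.2)%:R - (size t.2)%:R * softphi xi i z)).
Proof.
rewrite /feval big_fderiv; apply: eq_bigr => t _ /=.
by rewrite /phimon big_cons -/(phimon t.2 z); ring.
Qed.

Lemma feval_derive i P z :
  is_derive z (delta_mx 0 i : V) (feval P) (feval (fderiv i P) z).
Proof.
elim: P => [|t P IH].
  have -> : feval [::] = cst 0 by apply/funext => y; rewrite /feval big_nil.
  by apply: (is_derive_eq (is_derive_cst _ _ _)).
have -> : feval (t :: P) = (fun y => t.1 * phimon t.2 y) + feval P.
  by apply/funext => y; rewrite /feval big_cons.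
apply: (is_derive_eq (is_deriveD (is_deriveZ t.1 (phimon_derive i t.2 z)) IH)).
by rewrite !feval_fderiv big_cons.
Qed.

Lemma pderiv_feval i P : pderiv i (feval P) = feval (fderiv i P).
Proof.
by apply/funext => z; have D := feval_derive i P z; rewrite /pderiv derive_val.
Qed.

Lemma fderivC i l P : feval (fderiv i (fderiv l P)) = feval (fderiv l (fderiv i P)).
Proof.
apply/funext => z; rewrite !feval_fderiv.
rewrite !(big_fderiv (fun t => t.1 * (phimon t.2 z * ((count_mem _ t.2)%:R
   - (size t.2)%:R * softphi xi _ z)))).
apply: eq_bigr => -[c s] _ /=; rewrite {2 4}/phimon !big_cons -/(phimon s z).
rewrite !natrD -addn1 natrD; case: (eqVneq l i) => [->|_] /=; ring.
Qed.

Lemma fderiv_congr i P Q : feval P = feval Q -> feval (fderiv i P) = feval (fderiv i Q).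
Proof. by move=> PQ; rewrite -!pderiv_feval PQ. Qed.

(* d_w P for a word w: the derivations of the letters, the first one last. *)
Definition fderivs (w : seq 'I_n) (P : fpoly) : fpoly := foldr fderiv P w.

Lemma fderivs_perm w w' P :
  perm_eq w w' -> feval (fderivs w P) = feval (fderivs w' P).
Proof.
have move_front w1 i w2 :
    feval (fderivs (w1 ++ i :: w2) P) = feval (fderivs (i :: w1 ++ w2) P).
  elim: w1 => [//|a w1 IH] /=.
  by rewrite (fderiv_congr a IH) /= fderivC.
elim: w w' => [|i w IH] w'; first by move/perm_size/esym/size0nil ->.
move=> ww'; have iw' : i \in w' by rewrite -(perm_mem ww') mem_head.
move: ww'; case/splitPr: iw' => w1 w2 ww'.
rewrite move_front /=; apply: fderiv_congr; apply: IH.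
by rewrite -(perm_cons i) (perm_trans ww') // (perm_catCA w1 [:: i] w2).
Qed.

Definition xmon (s : seq 'I_n) : R := \prod_(m <- s) xi m.
Definition fnorm (P : fpoly) : R := \sum_(t <- P) `|t.1| * xmon t.2.
Definition fdeg_le (d : nat) (P : fpoly) : bool := all (fun t => size t.2 <= d)%N P.

Lemma xmon_ge0 s : 0 <= xmon s.
Proof. by apply: prodr_ge0 => m _. Qed.

Lemma fnorm_ge0 P : 0 <= fnorm P.
Proof. by apply: sumr_ge0 => t _; rewrite mulr_ge0 // xmon_ge0. Qed.

(* At the origin phi_m(0) = xi_m, because \sum_k xi_k = 1. *)
Lemma softphi0 m : softphi xi m 0 = xi m.
Proof.
rewrite /softphi mxE expR0 mulr1 -[X in _ / X]/(softden 0).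
suff -> : softden 0 = 1 by rewrite divr1.
by rewrite /softden -xi_sum; apply: eq_bigr => k _; rewrite /expc mxE expR0 mulr1.
Qed.

Lemma phimon0 s : phimon s 0 = xmon s.
Proof. by apply: eq_bigr => m _; rewrite softphi0. Qed.

Lemma feval0_le P : `|feval P 0| <= fnorm P.
Proof.
rewrite /feval /fnorm; apply: le_trans (ler_norm_sum _ _ _) _.
by apply: ler_sum => t _; rewrite normrM phimon0 (ger0_norm (xmon_ge0 _)).
Qed.

Lemma fdeg_fderiv d i P : fdeg_le d P -> fdeg_le d.+1 (fderiv i P).
Proof.
move=> /allP Pd; apply/allP => t; rewrite /fderiv => /flatten_mapP[u uP].
by rewrite !inE => /orP[] /eqP -> /=; [apply: leqW | rewrite ltnS]; apply: Pd.
Qed.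

Lemma fdeg_fderivs d w P : fdeg_le d P -> fdeg_le (d + size w) (fderivs w P).
Proof.
elim: w => [|i w IH] Pd /=; first by rewrite addn0.
by rewrite addnS; apply: fdeg_fderiv; apply: IH.
Qed.

Lemma sum_count_mem (s : seq 'I_n) : (\sum_(i < n) count_mem i s)%N = size s.
Proof.
elim: s => [|a s IH] /=; first by rewrite big1.
rewrite big_split /= IH (bigD1 a) //= eqxx big1 // => i /negbTE.
by rewrite eq_sym => ->.
Qed.

(* One derivation step, summed over all directions, multiplies the norm of a
   polynomial of degree <= d by at most 2 d; this is where \sum_i xi_i = 1. *)
Lemma fnorm_fderiv_sum d P : fdeg_le d P ->
  \sum_(i < n) fnorm (fderiv i P) <= 2 * d%:R * fnorm P.
Proof.
move=> /allP Pd.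
have term i : fnorm (fderiv i P) = \sum_(t <- P)
    `|t.1| * xmon t.2 * ((count_mem i t.2)%:R + (size t.2)%:R * xi i).
  rewrite /fnorm (big_fderiv (fun t => `|t.1| * xmon t.2)).
  apply: eq_bigr => -[c s] _ /=; rewrite normrN !normrM !normr_nat.
  by rewrite /xmon big_cons -/(xmon s); ring.
rewrite (eq_bigr _ (fun i _ => term i)) exchange_big /= /fnorm mulr_sumr.
rewrite !big_seq; apply: ler_sum => t tP.
rewrite -mulr_sumr big_split /= -mulr_sumr xi_sum mulr1 -natr_sum sum_count_mem.
rewrite [leRHS]mulrC ler_wpM2l ?mulr_ge0 ?xmon_ge0 //.
by rewrite mulr_natl mulr2n -!natrD ler_nat leq_add ?Pd.
Qed.

Lemma sum_words_fnorm k P : fdeg_le 1 P ->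
  sum_words k (fun w => fnorm (fderivs w P)) <= (2 ^ k * k`!)%:R * fnorm P.
Proof.
move=> P1; elim: k => [|k IH]; first by rewrite /= mul1r.
rewrite sum_wordsS.
apply: (@le_trans _ _ (sum_words k (fun w => (2 * (1 + k)%:R) * fnorm (fderivs w P)))).
  by apply: ler_sum_words => w sw; rewrite -sw; apply/fnorm_fderiv_sum/fdeg_fderivs.
rewrite sum_wordsZ; apply: le_trans (ler_wpM2l _ IH) _; first by rewrite mulr_ge0.
rewrite mulrA ler_wpM2r ?fnorm_ge0 // -[2 : R]/(2%:R) -!natrM ler_nat.
by rewrite factS expnS; apply: eq_leq; ring.
Qed.

Definition mword (g : 'I_n -> nat) : seq 'I_n :=
  flatten [seq nseq (g i) i | i <- enum 'I_n].

Lemma count_mword (g : 'I_n -> nat) m : count_mem m (mword g) = g m.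
Proof.
rewrite /mword count_flatten -map_comp sumnE big_map big_enum /=.
rewrite (bigD1 m) //= count_nseq /= eqxx mul1n big1 ?addn0 // => i /negbTE.
by rewrite count_nseq /= eq_sym => ->.
Qed.

Lemma mpderiv_mword (g : 'I_n -> nat) P :
  mpderiv g (feval P) = feval (fderivs (mword g) P).
Proof.
rewrite /mpderiv /mword /fderivs.
have -> : foldr (fun i h => iter (g i) (pderiv i) h) (feval P) (enum 'I_n) =
          foldr (fun i h => pderiv i h) (feval P)
                (flatten [seq nseq (g i) i | i <- enum 'I_n]).
  elim: (enum 'I_n) => [//|a s IH] /=; rewrite foldr_cat -IH.
  by elim: (g a) => [//|c IHc] /=; rewrite IHc.
by elim: (flatten _) => [//|i w IH] /=; rewrite IH pderiv_feval.
Qed.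

Definition fphi (j : 'I_n) : fpoly := [:: (1, [:: j])].

Lemma feval_fphi j : feval (fphi j) = softphi xi j.
Proof. by apply/funext => z; rewrite /feval /phimon !big_seq1 mul1r. Qed.

Lemma fnorm_fphi j : fnorm (fphi j) = xi j.
Proof. by rewrite /fnorm /xmon !big_seq1 normr1 mul1r. Qed.

Lemma sum_taylor_coef_words j k :
  (k`!)%:R * \sum_(g : {ffun 'I_n -> 'I_k.+1} | mdeg g == k)
     `| taylor_coef (softphi xi j) (fun i => (g i : nat)) | =
  sum_words k (fun w => `|feval (fderivs w (fphi j)) 0|).
Proof.
pose X (g : {ffun 'I_n -> 'I_k.+1}) :=
  `|feval (fderivs (mword (fun i => (g i : nat))) (fphi j)) 0|.
transitivity (sum_words k (fun w => X (mtype k w))); last first.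
  apply: eq_sum_words => w sw; rewrite /X (fderivs_perm (w' := w)) //.
  apply/allP => m _ /=.
  by rewrite count_mword ffunE inordK // ltnS -sw count_size.
rewrite sum_words_mtype // mulr_sumr; apply: eq_bigr => g _.
rewrite /taylor_coef -feval_fphi mpderiv_mword normrM normfV normr_nat.
by rewrite mulrCA mulrA.
Qed.

Lemma sum_taylor_coef_le j k :
  \sum_(g : {ffun 'I_n -> 'I_k.+1} | mdeg g == k)
     `| taylor_coef (softphi xi j) (fun i => (g i : nat)) | <= 2 ^+ k * xi j.
Proof.
have k0 : 0 < (k`!)%:R :> R by rewrite ltr0n fact_gt0.
rewrite -(ler_pM2l k0) sum_taylor_coef_words -fnorm_fphi.
apply: le_trans (ler_sum_words (fun w _ => feval0_le _)) _.
apply: le_trans (sum_words_fnorm k (_ : fdeg_le 1 (fphi j))) _ => //.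
by rewrite natrM natrX mulrA [_ * (k`!)%:R]mulrC.
Qed.

End Softmax.

(* Since 2 <= e, we have 2^k <= e^(k+1). *)
Lemma exp2_le_expR (R : realType) (k : nat) : 2 ^+ k <= expR (k%:R + 1) :> R.
Proof.
have e2 : 2 <= expR (1 : R) by have := expR_ge1Dx (1 : R); rewrite -[1 + 1]/2.
have -> : k%:R + 1 = k.+1%:R * (1 : R) by rewrite mulr1 -natr1.
rewrite expRM_natl.
apply: le_trans (_ : 2 ^+ k.+1 <= _); last by rewrite lerXn2r ?nnegrE ?expR_ge0.
by rewrite exprS ler_peMl ?exprn_ge0 // ler1n.
Qed.

(* Multi-indices gamma with |gamma| = k have all entries <= k, so they are
   enumerated as gamma : {ffun 'I_n -> 'I_k.+1} with \sum_i gamma i = k. *)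
Theorem lemmaB5 (R : realType) (n : nat) (xi : 'I_n -> R)
  (xi_ge0 : forall i, 0 <= xi i) (xi_sum : \sum_(i < n) xi i = 1)
  (j : 'I_n) (k : nat) (hk : (1 <= k)%N) :
  \sum_(gamma : {ffun 'I_n -> 'I_k.+1} | (\sum_(i < n) (gamma i : nat))%N == k)
     `| taylor_coef (softphi xi j) (fun i => (gamma i : nat)) |
  <= xi j * expR (k%:R + 1).
Proof.
apply: le_trans (sum_taylor_coef_le xi_ge0 xi_sum j k) _.
by rewrite mulrC ler_wpM2l // exp2_le_expR.
Qed.
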